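(* With notation as below, the inequality \[ \mathbb E\bigl(|\mathcal T_1|-1+t\bigr)^{\alpha}\le \mathbb E\bigl(|\mathcal T_2|-1+t\bigr)^{\alpha} \] holds for all negative integers $\alpha$ and all $t\in(0,\infty)$ if and only if $\Phi_1(t)\le\Phi_2(t)$ for all $t\in(0,1)$; and in that case the inequality holds for all real $\alpha<0$ and all $t\in(0,\infty)$.
   Context: For $j=1,2$, let $\xi_j$ be a random variable with values in $\{0,1,2,\dots\}$ with $\mathbb E\xi_j=1$ and $0<\operatorname{Var}\xi_j<\infty$, with probability generating function $\Phi_j(t)=\mathbb E t^{\xi_j}$, and let $\mathcal T_j$ be a Galton–Watson tree with offspring distribution $\xi_j$; $|\mathcal T_j|$ is its number of vertices. *)

From Stdlib Require Import Reals Lra.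
From Coquelicot Require Import Coquelicot.
Open Scope R_scope.

(* An offspring distribution xi on {0,1,2,...} is given by its law
   p : nat -> R, p k = P(xi = k). *)
Definition offspring_law (p : nat -> R) : Prop :=
  (forall k, 0 <= p k) /\ is_series p 1.

Definition mean_one (p : nat -> R) : Prop :=
  is_series (fun k => INR k * p k) 1.

(* 0 < Var xi < infinity  (given E xi = 1, Var xi = E xi^2 - 1) *)
Definition finite_positive_variance (p : nat -> R) : Prop :=
  ex_series (fun k => INR k ^ 2 * p k) /\
  0 < Series (fun k => INR k ^ 2 * p k) - 1.

Definition pgf (p : nat -> R) (t : R) : R := Series (fun k => p k * t ^ k).

(* Law of the size of a forest of k independent GW trees:
   forest_law q k m = P(|T^(1)| + ... + |T^(k)| = m), given q = law of |T|. *)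
Fixpoint forest_law (q : nat -> R) (k m : nat) : R :=
  match k with
  | O => if Nat.eqb m 0 then 1 else 0
  | S k' => sum_f_R0 (fun j => q j * forest_law q k' (m - j)%nat) m
  end.

(* Law of the number of vertices |T| of a Galton-Watson tree with offspring
   law p: the root has k children with probability p k, and the k subtrees
   are independent GW trees, so
     P(|T| = n) = sum_k p k * P(|T^(1)| + ... + |T^(k)| = n - 1)   (n >= 1),
   P(|T| = 0) = 0.  Only k <= n-1 contribute. *)
Fixpoint gw_size_law_fuel (p : nat -> R) (fuel : nat) : nat -> R :=
  match fuel with
  | O => fun _ => 0
  | S f => fun n =>
      match n with
      | O => 0
      | S n' => sum_f_R0 (fun k => p k * forest_law (gw_size_law_fuel p f) k n') n'
      end
  end.

Definition gw_size_law (p : nat -> R) (n : nat) : R := gw_size_law_fuel p (S n) n.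

Definition gw_moment (p : nat -> R) (alpha t : R) : R :=
  Series (fun n => gw_size_law p n * Rpower (INR n - 1 + t) alpha).

From Stdlib Require Import Reals Lra Lia Classical.
From Coquelicot Require Import Coquelicot.
Open Scope R_scope.

(* Let [G(z) = E z^|T|].  Splitting the tree at its root gives [G(z) = z Phi(G(z))] on [[0,1]];
   since [Var xi > 0], [Phi(x) / x] is strictly decreasing on [(0,1]], so [G(z)] is the unique
   root of [x / Phi(x) = z], and [G1 <= G2] on [(0,1)] iff [Phi1 <= Phi2] there.  Negative
   moments are tied to [G] in both directions by Laplace-type identities:
   - [(1 + (n - 1) s / M)^(-M) -> e^(-(n - 1) s)] as [M -> oo], so by dominated convergence the
     integer moments at [t = M / s] recover [e^s G(e^(-s))];
   - [Gamma(b) a^(-b) = int_0^oo s^(b-1) e^(-a s) ds] with [a = |T| - 1 + t] gives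
     [Gamma(b) E(|T| - 1 + t)^(-b) = int_0^oo s^(b-1) e^(-(t-1) s) G(e^(-s)) ds],
     which is monotone in [G]. *)

Lemma sum_f_R0_nonneg f N :
  (forall i, (i <= N)%nat -> 0 <= f i) -> 0 <= sum_f_R0 f N.
Proof.
  induction N as [|N IH]; intros Hf; simpl; [apply Hf; lia|].
  apply Rplus_le_le_0_compat; [apply IH; intros; apply Hf|apply Hf]; lia.
Qed.

Lemma sum_f_R0_le_extend f n m :
  (forall i, 0 <= f i) -> (n <= m)%nat -> sum_f_R0 f n <= sum_f_R0 f m.
Proof.
  intros Hf Hnm. induction Hnm as [|m _ IH]; simpl; [lra|].
  specialize (Hf (S m)). lra.
Qed.

Lemma sum_f_R0_zero_extend f n m : (n <= m)%nat ->
  (forall i, (n < i <= m)%nat -> f i = 0) -> sum_f_R0 f n = sum_f_R0 f m.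
Proof.
  intros Hnm. induction Hnm as [|m Hnm IH]; intros Hf; [reflexivity|].
  simpl. rewrite Hf, IH by (try intros; try apply Hf; lia). ring.
Qed.

Lemma sum_f_R0_mult_r f c N : sum_f_R0 f N * c = sum_f_R0 (fun i => f i * c) N.
Proof. rewrite <- scal_sum. ring. Qed.

Lemma sum_f_R0_mult_l f c N : c * sum_f_R0 f N = sum_f_R0 (fun i => c * f i) N.
Proof. rewrite scal_sum. apply sum_eq. intros; ring. Qed.

Lemma sum_f_R0_swap (b : nat -> nat -> R) M N :
  sum_f_R0 (fun n => sum_f_R0 (fun k => b k n) M) N =
  sum_f_R0 (fun k => sum_f_R0 (fun n => b k n) N) M.
Proof.
  induction N as [|N IH]; simpl; [reflexivity|].
  rewrite IH, <- sum_plus. reflexivity.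
Qed.

Lemma sum_f_R0_antidiagonal (a : nat -> nat -> R) N :
  sum_f_R0 (fun m => sum_f_R0 (fun j => a j (m - j)%nat) m) N =
  sum_f_R0 (fun j => sum_f_R0 (fun i => a j i) (N - j)) N.
Proof.
  induction N as [|N IH]; [reflexivity|].
  rewrite tech5, IH, (tech5 (fun j => a j (S N - j)%nat)).
  rewrite (tech5 (fun j => sum_f_R0 (fun i => a j i) (S N - j)%nat)), Nat.sub_diag.
  rewrite <- Rplus_assoc, <- sum_plus. f_equal.
  apply sum_eq. intros j Hj. replace (S N - j)%nat with (S (N - j)) by lia. reflexivity.
Qed.

Lemma forest_law_ext q q' k m : (forall j, (j <= m)%nat -> q j = q' j) ->
  forest_law q k m = forest_law q' k m.
Proof.
  revert m. induction k as [|k IH]; intros m Hq; simpl; [reflexivity|].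
  apply sum_eq. intros j Hj. rewrite Hq, IH by (try intros; try apply Hq; lia). reflexivity.
Qed.

Lemma forest_law_nonneg q k m : (forall j, (j <= m)%nat -> 0 <= q j) ->
  0 <= forest_law q k m.
Proof.
  revert m. induction k as [|k IH]; intros m Hq; simpl.
  - destruct (Nat.eqb m 0); lra.
  - apply sum_f_R0_nonneg. intros j Hj.
    apply Rmult_le_pos; [apply Hq; lia | apply IH; intros; apply Hq; lia].
Qed.

(* Trees have at least one vertex, so [k] of them have at least [k]. *)
Lemma forest_law_lt q k m : q 0%nat = 0 -> (m < k)%nat -> forest_law q k m = 0.
Proof.
  intros Hq0. revert m. induction k as [|k IH]; intros m Hm; [lia|]. simpl.
  rewrite <- (Rmult_0_l (INR (S m))), <- sum_cte. apply sum_eq. intros [|j] Hj.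
  - rewrite Hq0. ring.
  - rewrite IH by lia. ring.
Qed.

Lemma gw_size_law_fuel_stable p f f' n : (n < f)%nat -> (n < f')%nat ->
  gw_size_law_fuel p f n = gw_size_law_fuel p f' n.
Proof.
  revert f' n. induction f as [|f IH]; intros f' n Hf Hf'; [lia|].
  destruct f' as [|f']; [lia|]. destruct n as [|n]; [reflexivity|]. simpl.
  apply sum_eq. intros k Hk. f_equal. apply forest_law_ext. intros j Hj. apply IH; lia.
Qed.

Lemma gw_size_law_0 p : gw_size_law p 0 = 0.
Proof. reflexivity. Qed.

Lemma gw_size_law_S p n : gw_size_law p (S n) =
  sum_f_R0 (fun k => p k * forest_law (gw_size_law p) k n) n.
Proof.
  unfold gw_size_law at 1. change (gw_size_law_fuel p (S (S n)) (S n)) with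
    (sum_f_R0 (fun k => p k * forest_law (gw_size_law_fuel p (S n)) k n) n).
  apply sum_eq. intros k Hk. f_equal. apply forest_law_ext. intros j Hj.
  apply gw_size_law_fuel_stable; lia.
Qed.

Lemma gw_size_law_1 p : gw_size_law p 1 = p 0%nat.
Proof. rewrite gw_size_law_S. simpl. ring. Qed.

Lemma gw_size_law_nonneg p : (forall k, 0 <= p k) -> forall n, 0 <= gw_size_law p n.
Proof.
  intros Hp n. induction n as [n IH] using (well_founded_induction Wf_nat.lt_wf).
  destruct n as [|n]; [rewrite gw_size_law_0; lra|].
  rewrite gw_size_law_S. apply sum_f_R0_nonneg. intros k Hk.
  apply Rmult_le_pos; [apply Hp|]. apply forest_law_nonneg. intros j Hj. apply IH. lia.
Qed.

Definition partial_gf (q : nat -> R) (z : R) (N : nat) : R :=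
  sum_f_R0 (fun j => q j * z ^ j) N.

Lemma partial_gf_nonneg q z N : (forall n, 0 <= q n) -> 0 <= z -> 0 <= partial_gf q z N.
Proof.
  intros Hq Hz. apply sum_f_R0_nonneg. intros. apply Rmult_le_pos; auto using pow_le.
Qed.

Lemma forest_term_convolution q z k m :
  forest_law q (S k) m * z ^ m =
  sum_f_R0 (fun j => (q j * z ^ j) * (forest_law q k (m - j) * z ^ (m - j))) m.
Proof.
  simpl forest_law. rewrite sum_f_R0_mult_r. apply sum_eq. intros j Hj.
  replace (z ^ m) with (z ^ j * z ^ (m - j)) by (rewrite <- pow_add; f_equal; lia). ring.
Qed.

Lemma forest_partial_gf_le_pow q z : (forall j, 0 <= q j) -> 0 <= z ->
  forall k L, partial_gf (forest_law q k) z L <= partial_gf q z L ^ k.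
Proof.
  intros Hq Hz. induction k as [|k IH]; intros L.
  - unfold partial_gf. induction L as [|L IHL]; simpl in *; lra.
  - set (a j i := (q j * z ^ j) * (forest_law q k i * z ^ i)).
    assert (Ha : forall j i, 0 <= a j i).
    { intros j i. unfold a. repeat apply Rmult_le_pos; auto using pow_le.
      apply forest_law_nonneg; auto. }
    unfold partial_gf at 1. rewrite (sum_eq _ (fun m => sum_f_R0 (fun j => a j (m - j)%nat) m))
      by (intros; apply forest_term_convolution).
    rewrite sum_f_R0_antidiagonal.
    apply Rle_trans with (sum_f_R0 (fun j => (q j * z ^ j) * partial_gf q z L ^ k) L).
    + apply sum_Rle. intros j Hj. unfold a. rewrite <- sum_f_R0_mult_l.
      apply Rmult_le_compat_l; [apply Rmult_le_pos; auto using pow_le|].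
      eapply Rle_trans; [|apply (IH L)]. apply sum_f_R0_le_extend; [|lia].
      intros; apply Rmult_le_pos; auto using pow_le. apply forest_law_nonneg; auto.
    + rewrite <- sum_f_R0_mult_r. right. reflexivity.
Qed.

Lemma gw_partial_gf_S p z M : partial_gf (gw_size_law p) z (S M) =
  z * sum_f_R0 (fun k => p k * partial_gf (forest_law (gw_size_law p) k) z M) M.
Proof.
  unfold partial_gf at 1. rewrite decomp_sum by lia. simpl pred.
  rewrite gw_size_law_0, Rmult_0_l, Rplus_0_l, sum_f_R0_mult_l.
  transitivity (sum_f_R0 (fun n => sum_f_R0
    (fun k => z * (p k * (forest_law (gw_size_law p) k n * z ^ n))) M) M).
  - apply sum_eq; intros n Hn. rewrite gw_size_law_S.
    rewrite (sum_f_R0_zero_extend _ n M Hn).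
    + rewrite sum_f_R0_mult_r. apply sum_eq. intros k Hk. simpl. ring.
    + intros i Hi. rewrite forest_law_lt by (reflexivity || lia). ring.
  - rewrite sum_f_R0_swap. apply sum_eq. intros k Hk. unfold partial_gf.
    rewrite sum_f_R0_mult_l, sum_f_R0_mult_l. reflexivity.
Qed.

Lemma is_series_iff_partial a l :
  is_series a l <-> is_lim_seq (fun N => sum_f_R0 a N) l.
Proof.
  split; intro H.
  - eapply is_lim_seq_ext; [intro n; apply sum_n_Reals|exact H].
  - assert (H' : is_lim_seq (sum_n a) l).
    { eapply is_lim_seq_ext; [intro n; symmetry; apply sum_n_Reals|exact H]. }
    exact H'.
Qed.

Lemma Series_partial_lim a : ex_series a -> is_lim_seq (fun N => sum_f_R0 a N) (Series a).
Proof. intro H. apply is_series_iff_partial, Series_correct, H. Qed.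

Lemma sum_f_R0_le_Series a N : (forall n, 0 <= a n) -> ex_series a ->
  sum_f_R0 a N <= Series a.
Proof.
  intros Ha E. apply (is_lim_seq_incr_compare (fun N => sum_f_R0 a N)).
  - apply Series_partial_lim, E.
  - intros n. simpl. specialize (Ha (S n)). lra.
Qed.

Lemma term_le_Series a k : (forall n, 0 <= a n) -> ex_series a -> a k <= Series a.
Proof.
  intros Ha E. eapply Rle_trans; [|apply (sum_f_R0_le_Series a k Ha E)].
  destruct k as [|k]; simpl; [lra|].
  assert (0 <= sum_f_R0 a k) by (apply cond_pos_sum, Ha). lra.
Qed.

Lemma Series_ge_0 a : (forall n, 0 <= a n) -> ex_series a -> 0 <= Series a.
Proof. intros Ha E. eapply Rle_trans; [apply (Ha 0%nat)|apply term_le_Series; auto]. Qed.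

Lemma Series_le_of_partial a B : ex_series a -> (forall N, sum_f_R0 a N <= B) ->
  Series a <= B.
Proof.
  intros E H.
  apply (is_lim_seq_le _ (fun _ => B) _ _ H (Series_partial_lim a E) (is_lim_seq_const B)).
Qed.

Lemma ex_series_of_bounded_partial a B : (forall n, 0 <= a n) ->
  (forall N, sum_f_R0 a N <= B) -> ex_series a.
Proof.
  intros Ha HB. destruct (ex_finite_lim_seq_incr (fun N => sum_f_R0 a N) B) as [l Hl]; auto.
  - intros n; simpl. specialize (Ha (S n)). lra.
  - exists l. apply is_series_iff_partial, Hl.
Qed.

Lemma ex_series_le_nonneg a b : (forall n, 0 <= a n <= b n) -> ex_series b -> ex_series a.
Proof.
  intros H E. apply (ex_series_le a b); auto. intros n.
  change (norm (a n)) with (Rabs (a n)). rewrite Rabs_pos_eq; apply H.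
Qed.

Lemma is_lim_seq_sum_f_R0 (u : nat -> nat -> R) (l : nat -> R) K :
  (forall k, is_lim_seq (fun m => u m k) (l k)) ->
  is_lim_seq (fun m => sum_f_R0 (u m) K) (sum_f_R0 l K).
Proof.
  intros H. induction K as [|K IH]; [apply H|]. apply is_lim_seq_plus'; [apply IH|apply H].
Qed.

Lemma is_series_forest_gf q z g : (forall j, 0 <= q j) -> 0 <= z ->
  is_series (fun j => q j * z ^ j) g ->
  forall k, is_series (fun m => forest_law q k m * z ^ m) (g ^ k).
Proof.
  intros Hq Hz Hg. induction k as [|k IH].
  - apply is_series_iff_partial. eapply is_lim_seq_ext; [|apply is_lim_seq_const].
    intros N. induction N as [|N IHN]; simpl in *; lra.
  - eapply is_series_ext; [intros m; symmetry; apply forest_term_convolution|].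
    change (g ^ S k) with (g * g ^ k). apply (is_series_mult_pos (fun j => q j * z ^ j)
                            (fun i => forest_law q k i * z ^ i)); auto.
    + intros j. apply Rmult_le_pos; auto using pow_le.
    + intros i. apply Rmult_le_pos; [apply forest_law_nonneg|]; auto using pow_le.
Qed.

Lemma pow_le_1 x k : 0 <= x <= 1 -> x ^ k <= 1.
Proof. intros H. rewrite <- (pow1 k). apply pow_incr. lra. Qed.

Lemma ex_series_pgf p x : offspring_law p -> 0 <= x <= 1 -> ex_series (fun k => p k * x ^ k).
Proof.
  intros [Hp Hs] Hx. apply (ex_series_le_nonneg _ p); [|exists 1; auto].
  intros n. split; [apply Rmult_le_pos; auto; apply pow_le; lra|].
  rewrite <- (Rmult_1_r (p n)) at 2. apply Rmult_le_compat_l; auto. apply pow_le_1; lra.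
Qed.

Lemma is_series_pgf p x : offspring_law p -> 0 <= x <= 1 ->
  is_series (fun k => p k * x ^ k) (pgf p x).
Proof. intros. apply Series_correct, ex_series_pgf; auto. Qed.

Lemma sum_f_R0_le_pgf p x N : offspring_law p -> 0 <= x <= 1 ->
  sum_f_R0 (fun k => p k * x ^ k) N <= pgf p x.
Proof.
  intros Hl Hx. apply sum_f_R0_le_Series; [|apply ex_series_pgf; auto].
  intros n. apply Rmult_le_pos; [apply Hl|apply pow_le; lra].
Qed.

Lemma pgf_1 p : offspring_law p -> pgf p 1 = 1.
Proof.
  intros [Hp Hs]. unfold pgf. rewrite (Series_ext _ p); [apply is_series_unique; auto|].
  intros n. rewrite pow1. ring.
Qed.

Definition size_gf (p : nat -> R) (z : R) : R := Series (fun n => gw_size_law p n * z ^ n).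

Section SizeGeneratingFunction.

Variable p : nat -> R.
Hypothesis Hl : offspring_law p.

Local Notation q := (gw_size_law p).

Let q_nonneg n : 0 <= q n := gw_size_law_nonneg p (proj1 Hl) n.

Lemma gw_partial_gf_S_le z M : 0 <= z ->
  partial_gf q z (S M) <= z * sum_f_R0 (fun k => p k * partial_gf q z M ^ k) M.
Proof.
  intros Hz. rewrite gw_partial_gf_S. apply Rmult_le_compat_l; auto.
  apply sum_Rle; intros k Hk. apply Rmult_le_compat_l; [apply Hl|].
  apply forest_partial_gf_le_pow; auto.
Qed.

Lemma gw_size_law_sum_le_1 M : sum_f_R0 q M <= 1.
Proof.
  assert (H : partial_gf q 1 M <= 1).
  { induction M as [|M IH].
    - unfold partial_gf; simpl. rewrite gw_size_law_0. lra.
    - eapply Rle_trans; [apply gw_partial_gf_S_le; lra|]. rewrite Rmult_1_l.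
      apply Rle_trans with (sum_f_R0 p M).
      + apply sum_Rle; intros k Hk. rewrite <- (Rmult_1_r (p k)) at 2.
        apply Rmult_le_compat_l; [apply Hl|]. apply pow_le_1. split; [|exact IH].
        apply partial_gf_nonneg; [apply q_nonneg|lra].
      + destruct Hl as [Hp Hs]. rewrite <- (is_series_unique _ _ Hs).
        apply sum_f_R0_le_Series; [auto|exists 1; auto]. }
  unfold partial_gf in H. erewrite sum_eq in H; [exact H|]. intros; rewrite pow1; ring.
Qed.

Lemma ex_series_gw_size_law : ex_series q.
Proof.
  apply (ex_series_of_bounded_partial _ 1); [apply q_nonneg|apply gw_size_law_sum_le_1].
Qed.

Lemma Series_gw_size_law_le_1 : Series q <= 1.
Proof. apply Series_le_of_partial; [apply ex_series_gw_size_law|apply gw_size_law_sum_le_1]. Qed.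

Lemma ex_series_size_gf z : 0 <= z <= 1 -> ex_series (fun n => q n * z ^ n).
Proof.
  intros Hz. apply (ex_series_le_nonneg _ q); [|apply ex_series_gw_size_law].
  intros n. assert (Hq := q_nonneg n). split.
  - apply Rmult_le_pos; auto. apply pow_le; lra.
  - rewrite <- (Rmult_1_r (q n)) at 2. apply Rmult_le_compat_l; auto. apply pow_le_1; auto.
Qed.

Lemma partial_gf_le_size_gf z M : 0 <= z <= 1 -> partial_gf q z M <= size_gf p z.
Proof.
  intros Hz. apply sum_f_R0_le_Series; [|apply ex_series_size_gf; auto].
  intros n. apply Rmult_le_pos; [apply q_nonneg|apply pow_le; lra].
Qed.

Lemma size_gf_nonneg z : 0 <= z <= 1 -> 0 <= size_gf p z.
Proof.
  intros Hz. apply Series_ge_0; [|apply ex_series_size_gf; auto].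
  intros n. apply Rmult_le_pos; [apply q_nonneg|apply pow_le; lra].
Qed.

(* [|T| >= 1], so [E z^|T| <= z]. *)
Lemma size_gf_le z : 0 <= z <= 1 -> size_gf p z <= z.
Proof.
  intros Hz. assert (Hq := q_nonneg).
  apply Rle_trans with (Series (fun n => z * q n)).
  - apply Series_le; [|apply (ex_series_scal_l z q), ex_series_gw_size_law].
    intros [|n]; split; try (apply Rmult_le_pos; auto; apply pow_le; lra).
    + rewrite gw_size_law_0. lra.
    + assert (z ^ S n <= z).
      { simpl. assert (z ^ n <= 1) by (apply pow_le_1; auto).
        assert (0 <= z ^ n) by (apply pow_le; lra). nra. }
      specialize (Hq (S n)). nra.
  - rewrite Series_scal_l. assert (H := Series_gw_size_law_le_1).
    rewrite <- (Rmult_1_r z) at 2. apply Rmult_le_compat_l; lra.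
Qed.

Lemma size_gf_le_fix z : 0 <= z <= 1 -> size_gf p z <= z * pgf p (size_gf p z).
Proof.
  intros Hz. assert (HG0 := size_gf_nonneg z Hz). assert (HG1 := size_gf_le z Hz).
  apply Series_le_of_partial; [apply ex_series_size_gf; auto|]. intros [|M].
  - simpl. rewrite gw_size_law_0, Rmult_0_l.
    apply Rmult_le_pos; [lra|]. apply Series_ge_0; [|apply ex_series_pgf; auto; lra].
    intros n. apply Rmult_le_pos; [apply Hl|apply pow_le; lra].
  - eapply Rle_trans; [apply (gw_partial_gf_S_le z M); lra|].
    apply Rmult_le_compat_l; [lra|].
    eapply Rle_trans; [|apply (sum_f_R0_le_pgf p _ M Hl); lra].
    apply sum_Rle. intros k Hk. apply Rmult_le_compat_l; [apply Hl|]. apply pow_incr. split.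
    + apply partial_gf_nonneg; [apply q_nonneg|lra].
    + apply partial_gf_le_size_gf; auto.
Qed.

(* By the Cauchy product, [E z^(|T_1| + ... + |T_k|) = G(z)^k]. *)
Lemma size_gf_ge_partial_fix z K : 0 <= z <= 1 ->
  z * sum_f_R0 (fun k => p k * size_gf p z ^ k) K <= size_gf p z.
Proof.
  intros Hz. set (G := size_gf p z).
  assert (Hf := is_series_forest_gf q z G q_nonneg (proj1 Hz)
                  (Series_correct _ (ex_series_size_gf z Hz))).
  set (u M k := p k * partial_gf (forest_law q k) z (M + K)).
  assert (Lu : is_lim_seq (fun M => z * sum_f_R0 (u M) K) (z * sum_f_R0 (fun k => p k * G ^ k) K)).
  { apply is_lim_seq_mult'; [apply is_lim_seq_const|]. apply is_lim_seq_sum_f_R0. intros k.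
    apply is_lim_seq_mult'; [apply is_lim_seq_const|].
    apply (is_lim_seq_incr_n (fun M => partial_gf (forest_law q k) z M) K).
    apply is_series_iff_partial, Hf. }
  refine (is_lim_seq_le _ (fun _ => G) _ _ _ Lu (is_lim_seq_const G)). intros M.
  eapply Rle_trans; [|apply (partial_gf_le_size_gf z (S (M + K)) Hz)].
  rewrite gw_partial_gf_S. apply Rmult_le_compat_l; [lra|].
  apply sum_f_R0_le_extend; [|lia]. intros k. apply Rmult_le_pos; [apply Hl|].
  apply partial_gf_nonneg; [|lra]. intros m. apply forest_law_nonneg. intros; apply q_nonneg.
Qed.

Lemma size_gf_fix z : 0 <= z <= 1 -> size_gf p z = z * pgf p (size_gf p z).
Proof.
  intros Hz. apply Rle_antisym; [apply size_gf_le_fix; auto|].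
  assert (HG := conj (size_gf_nonneg z Hz) (Rle_trans _ _ _ (size_gf_le z Hz) (proj2 Hz))).
  assert (L := Series_partial_lim _ (ex_series_pgf p _ Hl HG)).
  apply (is_lim_seq_le _ (fun _ => size_gf p z) _ _ (fun K => size_gf_ge_partial_fix z K Hz)
           (is_lim_seq_mult' _ _ _ _ (is_lim_seq_const z) L) (is_lim_seq_const _)).
Qed.

End SizeGeneratingFunction.

Section OffspringLaw.

Variable p : nat -> R.
Hypotheses (Hl : offspring_law p) (Hm : mean_one p) (Hv : finite_positive_variance p).

(* Otherwise [xi] takes values in {0,1} and [E xi^2 = E xi = 1]. *)
Lemma offspring_mass_ge_2 : exists k, (2 <= k)%nat /\ 0 < p k.
Proof.
  destruct Hl as [Hp Hs]. destruct Hv as [_ Hv2]. apply NNPP. intros Hn.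
  assert (H0 : forall k, (2 <= k)%nat -> p k = 0).
  { intros k Hk. destruct (Rle_lt_or_eq_dec 0 (p k) (Hp k)) as [h|h]; auto.
    exfalso. apply Hn. exists k; auto. }
  assert (Series (fun k => INR k ^ 2 * p k) = 1); [|lra].
  rewrite (Series_ext _ (fun k => INR k * p k)); [apply is_series_unique; auto|].
  intros [|[|k]]; simpl; try ring. rewrite H0 by lia. ring.
Qed.

Lemma is_series_mean_excess : is_series (fun k => (INR k - 1) * p k) 0.
Proof.
  replace 0 with (1 + - 1) by ring.
  eapply is_series_ext; [|apply (is_series_minus _ _ _ _ Hm (proj2 Hl))].
  intros k. change (INR k * p k + - p k = (INR k - 1) * p k). ring.
Qed.

(* [p 0 = sum_(k >= 1) (k - 1) p k], and the term [k >= 2] with [p k > 0] is positive. *)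
Lemma offspring_p0_pos : 0 < p 0%nat.
Proof.
  destruct offspring_mass_ge_2 as [k0 [Hk0 Hpk0]]. destruct Hl as [Hp _].
  assert (E := is_series_mean_excess).
  assert (Hsum := is_series_unique _ _ E).
  rewrite Series_incr_1 in Hsum by (eexists; exact E). change (INR 0) with 0 in Hsum.
  set (a k := (INR (S k) - 1) * p (S k)) in Hsum.
  assert (Ha : forall k, 0 <= a k).
  { intros k. unfold a. rewrite S_INR. apply Rmult_le_pos; [pose proof (pos_INR k); lra|apply Hp]. }
  assert (Hak : 0 < a (k0 - 1)%nat).
  { unfold a. replace (S (k0 - 1)) with k0 by lia. apply Rmult_lt_0_compat; auto.
    apply le_INR in Hk0. simpl in Hk0. lra. }
  assert (a (k0 - 1)%nat <= Series a).
  { apply term_le_Series; auto. apply (ex_series_incr_1 (fun k => (INR k - 1) * p k)).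
    eexists; exact E. }
  lra.
Qed.

Definition chord_gap (x y : R) (k : nat) : R := y * x ^ k - x * y ^ k + (INR k - 1) * (y - x).

Lemma pow_diff_le x y k : 0 <= x -> x <= y -> y <= 1 -> y ^ k - x ^ k <= INR k * (y - x).
Proof.
  intros Hx Hxy Hy. induction k as [|k IH]; [simpl; lra|]. rewrite S_INR. simpl.
  assert (x ^ k <= y ^ k) by (apply pow_incr; lra).
  assert (x ^ k <= 1) by (apply pow_le_1; lra).
  assert (0 <= x ^ k) by (apply pow_le; lra).
  nra.
Qed.

Lemma chord_gap_nonneg x y k : 0 < x -> x < y -> y <= 1 -> 0 <= chord_gap x y k
  /\ ((2 <= k)%nat -> 0 < chord_gap x y k).
Proof.
  intros Hx Hxy Hy. destruct k as [|j]; unfold chord_gap.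
  - simpl. split; [lra|intros; lia].
  - rewrite S_INR. simpl.
    replace (y * (x * x ^ j) - x * (y * y ^ j) + (INR j + 1 - 1) * (y - x))
      with (INR j * (y - x) - x * y * (y ^ j - x ^ j)) by ring.
    assert (H1 := pow_diff_le x y j (Rlt_le _ _ Hx) (Rlt_le _ _ Hxy) Hy).
    assert (x ^ j <= y ^ j) by (apply pow_incr; lra).
    assert (0 <= INR j) by apply pos_INR.
    assert (x * y < 1) by nra.
    assert (x * y * (y ^ j - x ^ j) <= x * y * (INR j * (y - x))) by (apply Rmult_le_compat_l; nra).
    split; [nra|]. intros Hj. assert (1 <= INR j) by (apply (le_INR 1); lia).
    assert (0 < (1 - x * y) * (INR j * (y - x))) by (apply Rmult_lt_0_compat; nra).
    nra.
Qed.

Lemma is_series_chord_gap x y : 0 <= x <= 1 -> 0 <= y <= 1 ->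
  is_series (fun k => p k * chord_gap x y k) (y * pgf p x - x * pgf p y).
Proof.
  intros Hx Hy.
  assert (H := is_series_plus _ _ _ _
                 (is_series_minus _ _ _ _ (is_series_scal_l y _ _ (is_series_pgf p x Hl Hx))
                                          (is_series_scal_l x _ _ (is_series_pgf p y Hl Hy)))
                 (is_series_scal_l (y - x) _ _ is_series_mean_excess)).
  change (is_series
    (fun k => y * (p k * x ^ k) + - (x * (p k * y ^ k)) + (y - x) * ((INR k - 1) * p k))
    (y * pgf p x + - (x * pgf p y) + (y - x) * 0)) in H.
  replace (y * pgf p x - x * pgf p y) with (y * pgf p x + - (x * pgf p y) + (y - x) * 0) by ring.
  refine (is_series_ext _ _ _ _ H). intros k. unfold chord_gap.
  change (y * (p k * x ^ k) + - (x * (p k * y ^ k)) + (y - x) * ((INR k - 1) * p k) =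
          p k * (y * x ^ k - x * y ^ k + (INR k - 1) * (y - x))). ring.
Qed.

Lemma pgf_ratio_strict x y : 0 < x -> x < y -> y <= 1 -> x * pgf p y < y * pgf p x.
Proof.
  intros Hx Hxy Hy. destruct offspring_mass_ge_2 as [k0 [Hk0 Hpk0]].
  assert (E := is_series_chord_gap x y ltac:(lra) ltac:(lra)).
  assert (Hs := is_series_unique _ _ E). cut (0 < Series (fun k => p k * chord_gap x y k)); [lra|].
  apply Rlt_le_trans with (p k0 * chord_gap x y k0).
  - apply Rmult_lt_0_compat; auto. apply chord_gap_nonneg; auto.
  - apply (term_le_Series (fun k => p k * chord_gap x y k)); [|eexists; exact E].
    intros k. apply Rmult_le_pos; [apply Hl|apply chord_gap_nonneg; auto].
Qed.

Lemma pgf_ratio_le x y : 0 < x -> x <= y -> y <= 1 -> x * pgf p y <= y * pgf p x.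
Proof.
  intros Hx [Hxy|<-] Hy; [left; apply pgf_ratio_strict; auto|lra].
Qed.

Lemma pgf_gt_id x : 0 < x < 1 -> x < pgf p x.
Proof.
  intros Hx. assert (H := pgf_ratio_strict x 1 (proj1 Hx) (proj2 Hx) (Rle_refl 1)).
  rewrite pgf_1 in H by exact Hl. lra.
Qed.

Lemma size_gf_pos z : 0 < z <= 1 -> 0 < size_gf p z.
Proof.
  intros Hz. apply Rlt_le_trans with (partial_gf (gw_size_law p) z 1).
  - unfold partial_gf. simpl. rewrite gw_size_law_0, gw_size_law_1.
    assert (H := offspring_p0_pos). nra.
  - apply partial_gf_le_size_gf; auto; lra.
Qed.

End OffspringLaw.

(* Both [g1] and [g2] are roots of [g / Phi(g) = z], and [g / Phi2(g)] is increasing. *)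
Lemma fixpoint_le p1 p2 z g1 g2 :
  offspring_law p2 -> mean_one p2 -> finite_positive_variance p2 ->
  0 < z -> 0 < g2 -> g1 <= 1 -> g1 = z * pgf p1 g1 -> g2 = z * pgf p2 g2 ->
  pgf p1 g1 <= pgf p2 g1 -> g1 <= g2.
Proof.
  intros Hl2 Hm2 Hv2 Hz Hg2 Hg1 F1 F2 HP.
  destruct (Rle_or_lt g1 g2) as [|Hlt]; [auto|exfalso].
  assert (S := pgf_ratio_strict p2 Hl2 Hm2 Hv2 g2 g1 Hg2 Hlt Hg1).
  assert (g2 * pgf p1 g1 <= g2 * pgf p2 g1) by (apply Rmult_le_compat_l; lra).
  assert (z * (g2 * pgf p1 g1) < z * (g1 * pgf p2 g2)) by (apply Rmult_lt_compat_l; lra).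
  assert (z * (g2 * pgf p1 g1) = g2 * g1) by (rewrite F1 at 2; ring).
  assert (z * (g1 * pgf p2 g2) = g1 * g2) by (rewrite F2 at 2; ring).
  lra.
Qed.

Section Comparison.

Variables p1 p2 : nat -> R.
Hypotheses (Hl1 : offspring_law p1) (Hm1 : mean_one p1) (Hv1 : finite_positive_variance p1)
           (Hl2 : offspring_law p2) (Hm2 : mean_one p2) (Hv2 : finite_positive_variance p2).

Lemma size_gf_le_of_pgf_le :
  (forall t, 0 < t < 1 -> pgf p1 t <= pgf p2 t) ->
  forall z, 0 < z < 1 -> size_gf p1 z <= size_gf p2 z.
Proof.
  intros HP z Hz. assert (Hz' : 0 <= z <= 1) by lra.
  assert (B1 := size_gf_le p1 Hl1 z Hz').
  assert (P1 := size_gf_pos p1 Hl1 Hm1 Hv1 z ltac:(lra)).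
  apply (fixpoint_le p1 p2 z); auto; try lra.
  - apply size_gf_pos; auto; lra.
  - apply size_gf_fix; auto.
  - apply size_gf_fix; auto.
  - apply HP. lra.
Qed.

(* Every [x] in [(0,1)] is [G1(z)] for [z = x / Phi1(x)]. *)
Lemma pgf_le_of_size_gf_le :
  (forall z, 0 < z < 1 -> size_gf p1 z <= size_gf p2 z) ->
  forall x, 0 < x < 1 -> pgf p1 x <= pgf p2 x.
Proof.
  intros HG x Hx. assert (Hgt := pgf_gt_id p1 Hl1 Hm1 Hv1 x Hx).
  set (z := x / pgf p1 x).
  assert (Fx : x = z * pgf p1 x) by (unfold z; field; lra).
  assert (Hz : 0 < z < 1).
  { split; [unfold z; apply Rdiv_lt_0_compat; lra|].
    apply Rmult_lt_reg_r with (pgf p1 x); [lra|]. lra. }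
  assert (Hz' : 0 <= z <= 1) by lra.
  assert (F1 := size_gf_fix p1 Hl1 z Hz'). assert (F2 := size_gf_fix p2 Hl2 z Hz').
  assert (P1 := size_gf_pos p1 Hl1 Hm1 Hv1 z ltac:(lra)).
  assert (P2 := size_gf_pos p2 Hl2 Hm2 Hv2 z ltac:(lra)).
  assert (B1 := size_gf_le p1 Hl1 z Hz'). assert (B2 := size_gf_le p2 Hl2 z Hz').
  assert (E1 : size_gf p1 z = x).
  { apply Rle_antisym; apply (fixpoint_le p1 p1 z); auto; lra. }
  assert (Hc := HG z Hz). rewrite E1 in Hc. set (g2 := size_gf p2 z) in *.
  assert (R := pgf_ratio_le p2 Hl2 Hm2 Hv2 x g2 (proj1 Hx) Hc ltac:(lra)).
  apply Rmult_le_reg_l with (z * g2); [nra|].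
  assert (z * (x * pgf p2 g2) <= z * (g2 * pgf p2 x)) by (apply Rmult_le_compat_l; lra).
  replace (z * g2 * pgf p1 x) with (g2 * (z * pgf p1 x)) by ring. rewrite <- Fx.
  replace (z * (x * pgf p2 g2)) with (x * (z * pgf p2 g2)) in H by ring. rewrite <- F2 in H.
  lra.
Qed.

End Comparison.

Lemma ex_series_dominated a q B : (forall n, Rabs (a n) <= B * q n) -> ex_series q ->
  ex_series a.
Proof.
  intros H E. apply (ex_series_le a (fun n => B * q n)); [exact H|].
  apply (ex_series_scal_l B q), E.
Qed.

Lemma Series_mult_diff_le q f g B N : (forall n, 0 <= q n) -> ex_series q ->
  (forall n, Rabs (f n) <= B) -> (forall n, Rabs (g n) <= B) ->
  Rabs (Series (fun n => q n * f n) - Series (fun n => q n * g n)) <=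
  sum_f_R0 (fun n => q n * Rabs (f n - g n)) N + 2 * B * (Series q - sum_f_R0 q N).
Proof.
  intros Hq Eq Hf Hg.
  assert (Hd : forall n, Rabs (f n - g n) <= 2 * B).
  { intros n. eapply Rle_trans; [apply Rabs_triang|]. rewrite Rabs_Ropp.
    specialize (Hf n). specialize (Hg n). lra. }
  assert (Dom : forall h, (forall n, Rabs (h n) <= 2 * B) -> ex_series (fun n => q n * h n)).
  { intros h Hh. apply (ex_series_dominated _ q (2 * B)); auto. intros n.
    rewrite Rabs_mult, Rabs_pos_eq, Rmult_comm by auto. apply Rmult_le_compat_r; auto. }
  assert (HfB : forall n, Rabs (f n) <= 2 * B).
  { intros n. specialize (Hf n). pose proof (Rabs_pos (f n)). lra. }
  assert (HgB : forall n, Rabs (g n) <= 2 * B).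
  { intros n. specialize (Hg n). pose proof (Rabs_pos (g n)). lra. }
  assert (Ed : ex_series (fun n => q n * Rabs (f n - g n))).
  { apply Dom. intros n. rewrite Rabs_Rabsolu. apply Hd. }
  rewrite <- Series_minus by auto.
  eapply Rle_trans; [apply Series_Rabs|].
  { apply (ex_series_ext (fun n => q n * Rabs (f n - g n))); auto. intros n.
    rewrite <- Rmult_minus_distr_l, Rabs_mult, (Rabs_pos_eq (q n)); auto. }
  rewrite (Series_ext _ (fun n => q n * Rabs (f n - g n))).
  2: { intros n. rewrite <- Rmult_minus_distr_l, Rabs_mult, (Rabs_pos_eq (q n)); auto. }
  rewrite (Series_incr_n _ (S N)), (Series_incr_n q (S N)) by (auto; lia). simpl pred.
  apply Rplus_le_compat_l. ring_simplify.
  rewrite <- Series_scal_l. apply Series_le.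
  - intros n. split; [apply Rmult_le_pos; auto; apply Rabs_pos|].
    rewrite Rmult_comm. apply Rmult_le_compat_r; auto.
  - apply (ex_series_scal_l (2 * B) (fun k => q (S N + k)%nat)), (ex_series_incr_n q (S N)), Eq.
Qed.

Lemma is_lim_seq_Series_dominated (q : nat -> R) (f : nat -> nat -> R) (g : nat -> R) B :
  (forall n, 0 <= q n) -> ex_series q ->
  (forall m n, Rabs (f m n) <= B) -> (forall n, is_lim_seq (fun m => f m n) (g n)) ->
  is_lim_seq (fun m => Series (fun n => q n * f m n)) (Series (fun n => q n * g n)).
Proof.
  intros Hq Eq Hf Hlim.
  assert (HB : 0 <= B) by (specialize (Hf 0%nat 0%nat); pose proof (Rabs_pos (f 0%nat 0%nat)); lra).
  assert (Hg : forall n, Rabs (g n) <= B).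
  { intros n. apply (is_lim_seq_le (fun m => Rabs (f m n)) (fun _ => B) (Rabs (g n)) B); auto.
    - apply (is_lim_seq_abs _ (g n)), Hlim.
    - apply is_lim_seq_const. }
  apply is_lim_seq_spec. intros eps. assert (He := cond_pos eps).
  set (d := eps / (4 * (B + 1))). assert (Hd : 0 < d) by (apply Rdiv_lt_0_compat; lra).
  assert (Tail := Series_partial_lim q Eq). apply is_lim_seq_spec in Tail.
  destruct (Tail (mkposreal d Hd)) as [N HN]. specialize (HN N (le_n N)). simpl in HN.
  assert (Fin : is_lim_seq (fun m => sum_f_R0 (fun n => q n * Rabs (f m n - g n)) N)
                  (sum_f_R0 (fun _ => 0) N)).
  { apply is_lim_seq_sum_f_R0. intros n. rewrite <- (Rmult_0_r (q n)).
    apply is_lim_seq_mult'; [apply is_lim_seq_const|]. rewrite <- Rabs_R0, <- (Rminus_diag (g n)).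
    apply (is_lim_seq_abs _ (g n - g n)).
    apply is_lim_seq_minus'; [apply Hlim|apply is_lim_seq_const]. }
  rewrite sum_cte, Rmult_0_l in Fin.
  apply is_lim_seq_spec in Fin. destruct (Fin (mkposreal (eps / 2) ltac:(lra))) as [M HM].
  exists M. intros m Hm. specialize (HM m Hm). simpl in HM. rewrite Rminus_0_r in HM.
  eapply Rle_lt_trans; [apply (Series_mult_diff_le q _ _ B N); auto|].
  rewrite Rabs_pos_eq in HM
    by (apply sum_f_R0_nonneg; intros; apply Rmult_le_pos; auto; apply Rabs_pos).
  assert (HT : 0 <= Series q - sum_f_R0 q N).
  { assert (sum_f_R0 q N <= Series q) by (apply sum_f_R0_le_Series; auto). lra. }
  rewrite Rabs_minus_sym, Rabs_pos_eq in HN by lra.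
  assert (2 * B * (Series q - sum_f_R0 q N) <= 2 * B * d) by (apply Rmult_le_compat_l; lra).
  assert (2 * B * d <= eps / 2).
  { unfold d. replace (2 * B * (eps / (4 * (B + 1)))) with ((eps / 2) * (B / (B + 1)))
      by (field; lra).
    rewrite <- (Rmult_1_r (eps / 2)) at 2. apply Rmult_le_compat_l; [lra|].
    apply Rmult_le_reg_r with (B + 1); [lra|]. unfold Rdiv. rewrite Rmult_assoc, Rinv_l; lra. }
  lra.
Qed.

Lemma exp_le x y : x <= y -> exp x <= exp y.
Proof. intros [h|<-]; [left; apply exp_increasing; auto|lra]. Qed.

Lemma exp_pow x n : exp x ^ n = exp (INR n * x).
Proof.
  induction n as [|n IH]; simpl pow; [rewrite Rmult_0_l, exp_0; reflexivity|].
  rewrite IH, <- exp_plus, S_INR. f_equal. ring.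
Qed.

Lemma is_lim_seq_compound_inv c : 0 <= c ->
  is_lim_seq (fun m => exp (- (INR (S m) * ln (1 + c / INR (S m))))) (exp (- c)).
Proof.
  intros Hc. apply (is_lim_seq_continuous (fun x => exp (- x))).
  { apply derivable_continuous_pt, derivable_pt_comp;
      [apply derivable_pt_opp, derivable_pt_id|apply derivable_pt_exp]. }
  destruct (Rle_lt_or_eq_dec 0 c Hc) as [Hc'|<-].
  - assert (U : is_lim_seq (fun m => c / INR (S m)) 0).
    { rewrite <- (Rmult_0_r c). apply is_lim_seq_mult'; [apply is_lim_seq_const|].
      apply (is_lim_seq_inv _ p_infty); [|discriminate].
      apply (is_lim_seq_incr_1 INR p_infty), is_lim_seq_INR. }
    assert (Ev : eventually (fun m => Finite (c / INR (S m)) <> Finite 0)).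
    { exists 0%nat. intros n _ Hn. injection Hn.
      assert (0 < INR (S n)) by (apply lt_0_INR; lia).
      apply Rgt_not_eq, Rdiv_lt_0_compat; auto. }
    assert (L := is_lim_comp_seq (fun y => ln (1 + y) / y) _ 0 1 is_lim_div_ln1p_0 Ev U).
    assert (L' := is_lim_seq_mult' _ _ _ _ (is_lim_seq_const c) L). rewrite Rmult_1_r in L'.
    eapply is_lim_seq_ext; [|exact L'].
    intros m. assert (0 < INR (S m)) by (apply lt_0_INR; lia). cbv beta. field. split; lra.
  - eapply is_lim_seq_ext; [|apply is_lim_seq_const]. intros m.
    unfold Rdiv. rewrite Rmult_0_l, Rplus_0_r, ln_1. ring.
Qed.

(* [(1 + (n-1) s / M)^(-M)] with [M = m+1]; [n = 0] never matters since [|T| >= 1]. *)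
Definition compound_kernel (s : R) (m n : nat) : R :=
  match n with
  | O => 0
  | _ => exp (- (INR (S m) * ln (1 + (INR n - 1) * s / INR (S m))))
  end.

Definition exp_kernel (s : R) (n : nat) : R :=
  match n with O => 0 | _ => exp (- ((INR n - 1) * s)) end.

Lemma compound_kernel_bound s m n : 0 < s -> Rabs (compound_kernel s m n) <= 1.
Proof.
  intros Hs. destruct n as [|n]; cbn [compound_kernel]; [rewrite Rabs_R0; lra|].
  rewrite Rabs_pos_eq by (left; apply exp_pos).
  apply Rle_trans with (exp 0); [apply exp_le|rewrite exp_0; lra].
  assert (0 < INR (S m)) by (apply lt_0_INR; lia).
  assert (0 <= (INR (S n) - 1) * s / INR (S m)).
  { rewrite S_INR. apply Rdiv_le_0_compat; [apply Rmult_le_pos; pose proof (pos_INR n)|]; lra. }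
  assert (0 <= ln (1 + (INR (S n) - 1) * s / INR (S m))) by (rewrite <- ln_1; apply ln_le; lra).
  nra.
Qed.

Lemma compound_kernel_lim s n : 0 < s ->
  is_lim_seq (fun m => compound_kernel s m n) (exp_kernel s n).
Proof.
  intros Hs. destruct n as [|n]; [apply is_lim_seq_const|].
  apply is_lim_seq_compound_inv. rewrite S_INR. pose proof (pos_INR n).
  apply Rmult_le_pos; lra.
Qed.

Lemma gw_moment_scaled p s m : 0 < s ->
  Rpower (INR (S m) / s) (INR (S m)) * gw_moment p (- INR (S m)) (INR (S m) / s) =
  Series (fun n => gw_size_law p n * compound_kernel s m n).
Proof.
  intros Hs. unfold gw_moment. rewrite <- Series_scal_l. apply Series_ext. intros [|n].
  - rewrite gw_size_law_0. simpl. ring.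
  - unfold compound_kernel, Rpower. set (k := INR (S m)). set (T := k / s).
    assert (Hk : 0 < k) by (apply lt_0_INR; lia).
    assert (HT : 0 < T) by (apply Rdiv_lt_0_compat; auto).
    assert (Ha : 0 < INR (S n) - 1 + T) by (rewrite S_INR; pose proof (pos_INR n); lra).
    replace (exp (k * ln T) * (gw_size_law p (S n) * exp (- k * ln (INR (S n) - 1 + T))))
      with (gw_size_law p (S n) * (exp (k * ln T) * exp (- k * ln (INR (S n) - 1 + T)))) by ring.
    rewrite <- exp_plus. f_equal. f_equal.
    replace (1 + (INR (S n) - 1) * s / k) with ((INR (S n) - 1 + T) / T)
      by (unfold T; field; split; lra).
    rewrite ln_div by auto. ring.
Qed.

Lemma Series_exp_kernel p s :
  Series (fun n => gw_size_law p n * exp_kernel s n) = exp s * size_gf p (exp (- s)).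
Proof.
  unfold size_gf. rewrite <- Series_scal_l. apply Series_ext. intros [|n].
  - rewrite gw_size_law_0. simpl. ring.
  - unfold exp_kernel. rewrite exp_pow.
    replace (exp s * (gw_size_law p (S n) * exp (INR (S n) * - s)))
      with (gw_size_law p (S n) * (exp s * exp (INR (S n) * - s))) by ring.
    rewrite <- exp_plus. f_equal. f_equal. ring.
Qed.

(* [E(|T| - 1 + M/s)^(-M)], suitably normalised, tends to [e^s G(e^(-s))] as [M -> oo]. *)
Lemma size_gf_le_of_int_moments_le p1 p2 : offspring_law p1 -> offspring_law p2 ->
  (forall (m : nat) (t : R), 0 < t ->
     gw_moment p1 (- INR (S m)) t <= gw_moment p2 (- INR (S m)) t) ->
  forall z, 0 < z < 1 -> size_gf p1 z <= size_gf p2 z.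
Proof.
  intros Hl1 Hl2 HM z Hz. set (s := - ln z).
  assert (Hs : 0 < s).
  { unfold s. assert (ln z < ln 1) by (apply ln_increasing; lra). rewrite ln_1 in H. lra. }
  assert (Ez : exp (- s) = z) by (unfold s; rewrite Ropp_involutive; apply exp_ln; lra).
  assert (L : forall p, offspring_law p ->
            is_lim_seq (fun m => Series (fun n => gw_size_law p n * compound_kernel s m n))
                       (exp s * size_gf p z)).
  { intros p Hl. rewrite <- Ez, <- Series_exp_kernel.
    apply (is_lim_seq_Series_dominated _ _ _ 1).
    - apply gw_size_law_nonneg, Hl.
    - apply ex_series_gw_size_law, Hl.
    - intros m n. apply compound_kernel_bound, Hs.
    - intros n. apply compound_kernel_lim, Hs. }
  assert (Hle : forall m, Series (fun n => gw_size_law p1 n * compound_kernel s m n)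
                       <= Series (fun n => gw_size_law p2 n * compound_kernel s m n)).
  { intros m. rewrite <- !gw_moment_scaled by exact Hs. apply Rmult_le_compat_l.
    - left. apply exp_pos.
    - apply HM. apply Rdiv_lt_0_compat; auto. apply lt_0_INR; lia. }
  apply Rmult_le_reg_l with (exp s); [apply exp_pos|].
  apply (is_lim_seq_le _ _ _ _ Hle (L p1 Hl1) (L p2 Hl2)).
Qed.

(* [s^(b-1) e^(-c s)]: with [c = 1] the Gamma integrand, with [c = t - 1] the Laplace weight. *)
Definition gamma_weight (b c s : R) : R := exp ((b - 1) * ln s - c * s).

Lemma gamma_weight_pos b c s : 0 < gamma_weight b c s.
Proof. apply exp_pos. Qed.

Lemma continuous_gamma_weight b c s : 0 < s -> continuous (gamma_weight b c) s.
Proof.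
  intros Hs. apply (@ex_derive_continuous R_AbsRing R_NormedModule). unfold gamma_weight.
  auto_derive. exact Hs.
Qed.

Lemma ex_RInt_pos (f : R -> R) x y : 0 < x -> x <= y ->
  (forall u, 0 < u -> continuous f u) -> ex_RInt f x y.
Proof.
  intros Hx Hxy Hf. apply (@ex_RInt_continuous R_CompleteNormedModule). intros z Hz.
  rewrite Rmin_left in Hz by exact Hxy. apply Hf. lra.
Qed.

Lemma ex_RInt_gamma_weight b c x y : 0 < x -> x <= y -> ex_RInt (gamma_weight b c) x y.
Proof. intros. apply ex_RInt_pos; auto. intros; apply continuous_gamma_weight; auto. Qed.

Lemma RInt_gamma_weight_nonneg b c x y : 0 < x -> x <= y -> 0 <= RInt (gamma_weight b c) x y.
Proof.
  intros. apply RInt_ge_0; auto; [apply ex_RInt_gamma_weight; auto|].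
  intros; left; apply gamma_weight_pos.
Qed.

Lemma RInt_gamma_weight_Chasles b c x y z : 0 < x -> x <= y -> y <= z ->
  RInt (gamma_weight b c) x y + RInt (gamma_weight b c) y z = RInt (gamma_weight b c) x z.
Proof.
  intros. apply (@RInt_Chasles R_CompleteNormedModule); apply ex_RInt_gamma_weight; lra.
Qed.

Lemma RInt_gamma_weight_subinterval b c x' x y y' : 0 < x' -> x' <= x -> x <= y -> y <= y' ->
  RInt (gamma_weight b c) x y <= RInt (gamma_weight b c) x' y'.
Proof.
  intros. rewrite <- (RInt_gamma_weight_Chasles b c x' x y'),
                  <- (RInt_gamma_weight_Chasles b c x y y') by lra.
  assert (0 <= RInt (gamma_weight b c) x' x) by (apply RInt_gamma_weight_nonneg; lra).
  assert (0 <= RInt (gamma_weight b c) y y') by (apply RInt_gamma_weight_nonneg; lra).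
  lra.
Qed.

(* On [(0,1]], [s^(b-1) e^(-s) <= s^(b-1)], whose primitive is [s^b / b]. *)
Lemma RInt_gamma_weight_le_head b x : 0 < b -> 0 < x -> x <= 1 ->
  RInt (gamma_weight b 1) x 1 <= / b.
Proof.
  intros Hb Hx Hx1.
  assert (D : is_RInt (fun u => exp ((b - 1) * ln u)) x 1
                (minus (exp (b * ln 1) / b) (exp (b * ln x) / b))).
  { apply (is_RInt_derive (fun u => exp (b * ln u) / b)); intros u Hu;
      rewrite Rmin_left in Hu by lra; rewrite Rmax_right in Hu by lra.
    - auto_derive; [lra|]. replace ((b - 1) * ln u) with (b * ln u + - ln u) by ring.
      rewrite exp_plus, exp_Ropp, exp_ln by lra. field. split; lra.
    - apply (@ex_derive_continuous R_AbsRing R_NormedModule). auto_derive. lra. }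
  eapply Rle_trans.
  - refine (is_RInt_le (gamma_weight b 1) _ x 1 _ _ Hx1 _ D _).
    + apply (@RInt_correct R_CompleteNormedModule), ex_RInt_gamma_weight; auto.
    + intros u Hu. apply exp_le. lra.
  - change (exp (b * ln 1) / b - exp (b * ln x) / b <= / b).
    rewrite ln_1, Rmult_0_r, exp_0.
    assert (0 < exp (b * ln x) / b) by (apply Rdiv_lt_0_compat; auto; apply exp_pos).
    unfold Rdiv in *. lra.
Qed.

Definition gamma_tail_const (b : R) : R :=
  Rabs (b - 1) * Rabs (ln (2 * (Rabs (b - 1) + 1)) - 1).

(* From [ln u <= u / lam + ln lam - 1] with [lam = 2 (|b-1| + 1)]. *)
Lemma gamma_exponent_le b u : 1 <= u -> (b - 1) * ln u - 1 * u <= gamma_tail_const b - / 2 * u.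
Proof.
  intros Hu. unfold gamma_tail_const. set (c := Rabs (b - 1)). set (lam := 2 * (c + 1)).
  assert (Hc : 0 <= c) by apply Rabs_pos.
  assert (Hlam : 0 < lam) by (unfold lam; lra).
  assert (Hln : 0 <= ln u) by (rewrite <- ln_1; apply ln_le; lra).
  assert ((b - 1) * ln u <= c * ln u) by (apply Rmult_le_compat_r; auto; apply Rle_abs).
  assert (Hlog : ln u <= u / lam + ln lam - 1).
  { assert (E := exp_ineq1_le (ln (u / lam))). rewrite exp_ln in E by (apply Rdiv_lt_0_compat; lra).
    rewrite ln_div in E by lra. lra. }
  assert (c * ln u <= c * (u / lam + ln lam - 1)) by (apply Rmult_le_compat_l; auto).
  assert (c * (ln lam - 1) <= c * Rabs (ln lam - 1))
    by (apply Rmult_le_compat_l; auto; apply Rle_abs).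
  assert (c * (u / lam) <= u / 2).
  { unfold lam. apply Rmult_le_reg_r with (2 * (c + 1)); [lra|].
    replace (c * (u / (2 * (c + 1))) * (2 * (c + 1))) with (c * u) by (field; lra).
    replace (u / 2 * (2 * (c + 1))) with ((c + 1) * u) by field. nra. }
  lra.
Qed.

Lemma RInt_gamma_weight_le_tail b y : 1 <= y ->
  RInt (gamma_weight b 1) 1 y <= 2 * exp (gamma_tail_const b).
Proof.
  intros Hy. set (C := gamma_tail_const b).
  assert (D : is_RInt (fun u => exp (C - / 2 * u)) 1 y
                (minus (-2 * exp (C - / 2 * y)) (-2 * exp (C - / 2 * 1)))).
  { apply (is_RInt_derive (fun u => -2 * exp (C - / 2 * u))); intros u Hu.
    - auto_derive; [exact I|]. unfold Rminus. field.
    - apply (@ex_derive_continuous R_AbsRing R_NormedModule). auto_derive. exact I. }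
  eapply Rle_trans.
  - refine (is_RInt_le (gamma_weight b 1) _ 1 y _ _ Hy _ D _).
    + apply (@RInt_correct R_CompleteNormedModule), ex_RInt_gamma_weight; lra.
    + intros u Hu. apply exp_le, gamma_exponent_le. lra.
  - change (-2 * exp (C - / 2 * y) - -2 * exp (C - / 2 * 1) <= 2 * exp C).
    assert (0 < exp (C - / 2 * y)) by apply exp_pos.
    assert (exp (C - / 2 * 1) <= exp C) by (apply exp_le; lra). lra.
Qed.

Definition gamma_bound (b : R) : R := / b + 2 * exp (gamma_tail_const b).

Lemma RInt_gamma_weight_le_bound b x y : 0 < b -> 0 < x -> x <= y ->
  RInt (gamma_weight b 1) x y <= gamma_bound b.
Proof.
  intros Hb Hx Hxy. unfold gamma_bound.
  assert (0 < Rmin x 1) by (apply Rmin_glb_lt; lra).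
  apply Rle_trans with (RInt (gamma_weight b 1) (Rmin x 1) (Rmax y 1)).
  - apply RInt_gamma_weight_subinterval; auto; [apply Rmin_l|apply Rmax_l].
  - rewrite <- (RInt_gamma_weight_Chasles b 1 (Rmin x 1) 1 (Rmax y 1))
      by (auto; apply Rmin_r || apply Rmax_r).
    assert (RInt (gamma_weight b 1) (Rmin x 1) 1 <= / b)
      by (apply RInt_gamma_weight_le_head; auto; apply Rmin_r).
    assert (RInt (gamma_weight b 1) 1 (Rmax y 1) <= 2 * exp (gamma_tail_const b))
      by (apply RInt_gamma_weight_le_tail, Rmax_r).
    lra.
Qed.

Definition trunc_radius (k : nat) : R := INR k + 2.

Definition gamma_trunc (b a : R) (k : nat) : R :=
  RInt (gamma_weight b 1) (a / trunc_radius k) (a * trunc_radius k).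

(* [Gamma(b)], as the limit of the integrals over the windows [[a / L, a L]] for any [a > 0]. *)
Definition gamma_limit (b : R) : R := real (Lim_seq (gamma_trunc b 1)).

Lemma trunc_radius_ge_2 k : 2 <= trunc_radius k.
Proof. unfold trunc_radius. pose proof (pos_INR k). lra. Qed.

Lemma trunc_interval a L : 0 < a -> 2 <= L -> 0 < a / L /\ a / L <= a /\ a <= a * L.
Proof.
  intros Ha HL. repeat split.
  - apply Rdiv_lt_0_compat; lra.
  - apply Rmult_le_reg_r with L; [lra|]. unfold Rdiv. rewrite Rmult_assoc, Rinv_l by lra. nra.
  - nra.
Qed.

Lemma gamma_trunc_mono b a a' k k' : 0 < a -> 0 < a' ->
  a' * trunc_radius k <= a * trunc_radius k' -> a * trunc_radius k <= a' * trunc_radius k' ->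
  gamma_trunc b a k <= gamma_trunc b a' k'.
Proof.
  intros Ha Ha' H1 H2. unfold gamma_trunc.
  assert (T1 := trunc_radius_ge_2 k). assert (T2 := trunc_radius_ge_2 k').
  destruct (trunc_interval a _ Ha T1) as [I1 [I2 I3]].
  destruct (trunc_interval a' _ Ha' T2) as [J1 _].
  apply RInt_gamma_weight_subinterval; try lra.
  apply Rmult_le_reg_r with (trunc_radius k * trunc_radius k'); [nra|].
    unfold Rdiv. replace (a' * / trunc_radius k' * (trunc_radius k * trunc_radius k'))
      with (a' * trunc_radius k) by (field; lra).
    replace (a * / trunc_radius k * (trunc_radius k * trunc_radius k'))
      with (a * trunc_radius k') by (field; lra). lra.
Qed.

Lemma gamma_trunc_incr b a k : 0 < a -> gamma_trunc b a k <= gamma_trunc b a (S k).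
Proof.
  intros Ha. unfold trunc_radius.
  apply gamma_trunc_mono; auto; unfold trunc_radius; rewrite S_INR; pose proof (pos_INR k); nra.
Qed.

(* Both truncation windows [a/L, a L] and [a'/L', a' L'] eventually swallow each other. *)
Lemma gamma_trunc_cofinal b a a' k : 0 < a -> 0 < a' ->
  exists n, gamma_trunc b a k <= gamma_trunc b a' n.
Proof.
  intros Ha Ha'. assert (T := trunc_radius_ge_2 k).
  set (r := (a / a' + a' / a) * trunc_radius k).
  assert (P1 : 0 < a / a') by (apply Rdiv_lt_0_compat; auto).
  assert (P2 : 0 < a' / a) by (apply Rdiv_lt_0_compat; auto).
  destruct (nfloor_ex r) as [n [_ Hn]]; [unfold r; nra|].
  exists n. assert (HL : r < trunc_radius n) by (unfold trunc_radius; lra). unfold r in HL.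
  assert (E1 : a * (a' / a) = a') by (field; lra).
  assert (E2 : a' * (a / a') = a) by (field; lra).
  apply gamma_trunc_mono; auto.
  - assert (a * ((a' / a) * trunc_radius k) <= a * trunc_radius n)
      by (apply Rmult_le_compat_l; nra).
    nra.
  - assert (a' * ((a / a') * trunc_radius k) <= a' * trunc_radius n)
      by (apply Rmult_le_compat_l; nra).
    nra.
Qed.

Lemma is_lim_seq_gamma_trunc_Lim b a : 0 < b -> 0 < a ->
  is_lim_seq (gamma_trunc b a) (real (Lim_seq (gamma_trunc b a))).
Proof.
  intros Hb Ha. destruct (ex_finite_lim_seq_incr (gamma_trunc b a) (gamma_bound b)) as [l Hl].
  - intros; apply gamma_trunc_incr, Ha.
  - intros n. destruct (trunc_interval a _ Ha (trunc_radius_ge_2 n)) as [I1 [I2 I3]].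
    apply RInt_gamma_weight_le_bound; auto; lra.
  - rewrite (is_lim_seq_unique _ _ Hl). exact Hl.
Qed.

Lemma is_lim_seq_gamma_trunc b a : 0 < b -> 0 < a -> is_lim_seq (gamma_trunc b a) (gamma_limit b).
Proof.
  intros Hb Ha.
  assert (Le : forall a a', 0 < a -> 0 < a' ->
            real (Lim_seq (gamma_trunc b a)) <= real (Lim_seq (gamma_trunc b a'))).
  { intros a1 a2 H1 H2. refine (is_lim_seq_le _ (fun _ => _) _ _ _
                                  (is_lim_seq_gamma_trunc_Lim b a1 Hb H1) (is_lim_seq_const _)).
    intros k. destruct (gamma_trunc_cofinal b a1 a2 k H1 H2) as [n Hn].
    eapply Rle_trans; [exact Hn|]. apply is_lim_seq_incr_compare.
    - apply is_lim_seq_gamma_trunc_Lim; auto.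
    - intros; apply gamma_trunc_incr; auto. }
  unfold gamma_limit.
  replace (real (Lim_seq (gamma_trunc b 1))) with (real (Lim_seq (gamma_trunc b a))).
  - apply is_lim_seq_gamma_trunc_Lim; auto.
  - apply Rle_antisym; apply Le; lra.
Qed.

Lemma gamma_limit_pos b : 0 < b -> 0 < gamma_limit b.
Proof.
  intros Hb. apply Rlt_le_trans with (gamma_trunc b 1 0).
  - unfold gamma_trunc, trunc_radius. simpl.
    replace (1 / (0 + 2)) with (/ 2) by field. replace (1 * (0 + 2)) with 2 by ring.
    assert (H : RInt (fun _ => 0) (/ 2) 2 < RInt (gamma_weight b 1) (/ 2) 2).
    { apply RInt_lt; [lra|intros; apply continuous_gamma_weight; lra| |].
      - intros; apply continuous_const.
      - intros; apply gamma_weight_pos. }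
    rewrite (@RInt_const R_CompleteNormedModule) in H.
    change (scal (2 - / 2) 0) with ((2 - / 2) * 0) in H. lra.
  - apply is_lim_seq_incr_compare; [apply is_lim_seq_gamma_trunc; lra|].
    intros; apply gamma_trunc_incr; lra.
Qed.

Lemma CV_disk_le_radius (a : nat -> R) r : CV_disk a r -> Rbar_le r (CV_radius a).
Proof. intros H. apply (proj1 (Lub_Rbar_correct (CV_disk a))), H. Qed.


Lemma continuous_size_gf_exp p s : offspring_law p -> 0 < s ->
  continuous (fun s => size_gf p (exp (- s))) s.
Proof.
  intros Hl Hs. apply (continuous_comp (fun s => exp (- s)) (size_gf p)).
  - apply (@ex_derive_continuous R_AbsRing R_NormedModule). auto_derive. exact I.
  - apply continuity_pt_filterlim. change (continuity_pt (PSeries (gw_size_law p)) (exp (- s))).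
    apply PSeries_continuity. apply Rbar_lt_le_trans with 1.
    + simpl. rewrite Rabs_pos_eq by (left; apply exp_pos).
      rewrite <- exp_0. apply exp_increasing. lra.
    + apply CV_disk_le_radius. unfold CV_disk. apply (ex_series_ext (gw_size_law p)).
      * intros n. rewrite pow1, Rmult_1_r, Rabs_pos_eq; auto. apply gw_size_law_nonneg, Hl.
      * apply ex_series_gw_size_law, Hl.
Qed.

Lemma continuous_gamma_weight_exp_pow b c n s : 0 < s ->
  continuous (fun s => gamma_weight b c s * exp (- s) ^ n) s.
Proof.
  intros Hs. apply (continuous_mult (gamma_weight b c) (fun s => exp (- s) ^ n)).
  - apply continuous_gamma_weight, Hs.
  - apply (@ex_derive_continuous R_AbsRing R_NormedModule). auto_derive. exact I.
Qed.

Lemma is_RInt_weighted_partial_gf q b c x y N : 0 < x -> x <= y ->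
  is_RInt (fun s => gamma_weight b c s * partial_gf q (exp (- s)) N) x y
    (sum_f_R0 (fun n => q n * RInt (fun s => gamma_weight b c s * exp (- s) ^ n) x y) N).
Proof.
  intros Hx Hxy.
  assert (Hn : forall n, is_RInt (fun s => q n * (gamma_weight b c s * exp (- s) ^ n)) x y
                          (q n * RInt (fun s => gamma_weight b c s * exp (- s) ^ n) x y)).
  { intros n. apply (@is_RInt_scal R_NormedModule), (@RInt_correct R_CompleteNormedModule).
    apply ex_RInt_pos; auto. intros; apply continuous_gamma_weight_exp_pow; auto. }
  induction N as [|N IH].
  - eapply is_RInt_ext; [|apply Hn]. intros s _. unfold partial_gf. simpl. ring.
  - eapply is_RInt_ext; [|apply (@is_RInt_plus R_NormedModule _ _ _ _ _ _ IH (Hn (S N)))].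
    intros s _. unfold partial_gf. simpl. change (plus ?u ?v) with (u + v). ring.
Qed.

Lemma size_gf_sub_partial_le p z N : offspring_law p -> 0 <= z <= 1 ->
  size_gf p z - partial_gf (gw_size_law p) z N <=
  Series (gw_size_law p) - sum_f_R0 (gw_size_law p) N.
Proof.
  intros Hl Hz. assert (Hq := gw_size_law_nonneg p (proj1 Hl)).
  assert (Eq := ex_series_gw_size_law p Hl).
  unfold size_gf, partial_gf. rewrite (Series_incr_n _ (S N)), (Series_incr_n (gw_size_law p) (S N))
    by (try apply ex_series_size_gf; auto; lia). simpl pred.
  cut (Series (fun k => gw_size_law p (S N + k)%nat * z ^ (S N + k))
       <= Series (fun k => gw_size_law p (S N + k)%nat)); [lra|].
  apply Series_le; [|apply (ex_series_incr_n (gw_size_law p) (S N)), Eq]. intros n. split.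
  - apply Rmult_le_pos; auto. apply pow_le; lra.
  - rewrite <- (Rmult_1_r (gw_size_law p (S N + n))) at 2.
    apply Rmult_le_compat_l; auto. apply pow_le_1, Hz.
Qed.

Lemma ex_RInt_weighted_size_gf p b c x y : offspring_law p -> 0 < x -> x <= y ->
  ex_RInt (fun s => gamma_weight b c s * size_gf p (exp (- s))) x y.
Proof.
  intros Hl Hx Hxy. apply ex_RInt_pos; auto. intros u Hu.
  apply (continuous_mult (gamma_weight b c)).
  - apply continuous_gamma_weight, Hu.
  - apply continuous_size_gf_exp; auto.
Qed.

(* Termwise integration of [G(e^(-s)) = sum_n q_n e^(-n s)]: the tails are uniformly small. *)
Lemma is_series_RInt_size_gf p b c x y : offspring_law p -> 0 < x -> x <= y ->
  is_series (fun n => gw_size_law p n * RInt (fun s => gamma_weight b c s * exp (- s) ^ n) x y)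
    (RInt (fun s => gamma_weight b c s * size_gf p (exp (- s))) x y).
Proof.
  intros Hl Hx Hxy. set (q := gw_size_law p). assert (Eq := ex_series_gw_size_law p Hl).
  set (I := RInt (fun s => gamma_weight b c s * size_gf p (exp (- s))) x y : R).
  set (C := RInt (gamma_weight b c) x y : R).
  set (T N := Series q - sum_f_R0 q N).
  assert (EG := ex_RInt_weighted_size_gf p b c x y Hl Hx Hxy).
  assert (Ew : ex_RInt (gamma_weight b c) x y) by (apply ex_RInt_gamma_weight; auto).
  assert (Hz : forall s, x < s < y -> 0 <= exp (- s) <= 1).
  { intros s Hs. split; [left; apply exp_pos|]. rewrite <- exp_0. apply exp_le. lra. }
  apply is_series_iff_partial, (is_lim_seq_le_le (fun N => I - C * T N) _ (fun _ => I)).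
  - intros N. assert (HP := is_RInt_weighted_partial_gf q b c x y N Hx Hxy).
    rewrite <- (@is_RInt_unique R_CompleteNormedModule _ _ _ _ HP). split.
    + assert (H : RInt (fun s => gamma_weight b c s * size_gf p (exp (- s))
                       - gamma_weight b c s * partial_gf q (exp (- s)) N) x y
                  <= RInt (fun s => T N * gamma_weight b c s) x y).
      { apply RInt_le; auto.
        - apply (@ex_RInt_minus R_NormedModule); auto. eexists; exact HP.
        - apply (@ex_RInt_scal R_NormedModule); auto.
        - intros s Hs. rewrite <- Rmult_minus_distr_l, Rmult_comm.
          apply Rmult_le_compat_r; [left; apply gamma_weight_pos|].
          apply size_gf_sub_partial_le; auto. }
      rewrite (@RInt_minus R_CompleteNormedModule), (@RInt_scal R_CompleteNormedModule) in H
        by (auto; eexists; exact HP).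
      change (I - RInt (fun s => gamma_weight b c s * partial_gf q (exp (- s)) N) x y
              <= T N * C) in H.
      lra.
    + apply RInt_le; auto; [eexists; exact HP|]. intros s Hs.
      apply Rmult_le_compat_l; [left; apply gamma_weight_pos|]. apply partial_gf_le_size_gf; auto.
  - assert (L : is_lim_seq (fun N => I - C * T N) (I - C * (Series q - Series q))).
    { apply is_lim_seq_minus'; [apply is_lim_seq_const|].
      apply is_lim_seq_mult'; [apply is_lim_seq_const|].
      apply is_lim_seq_minus'; [apply is_lim_seq_const|apply Series_partial_lim, Eq]. }
    replace (I - C * (Series q - Series q)) with I in L by ring. exact L.
  - apply is_lim_seq_const.
Qed.

Lemma gamma_weight_shift b t n s : 0 < s ->
  gamma_weight b (INR n - 1 + t) s = gamma_weight b (t - 1) s * exp (- s) ^ n.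
Proof.
  intros Hs. unfold gamma_weight. rewrite exp_pow, <- exp_plus. f_equal. ring.
Qed.

(* The substitution [u = a s]. *)
Lemma RInt_gamma_weight_scale b a x y : 0 < a -> 0 < x -> x <= y ->
  RInt (gamma_weight b a) x y = Rpower a (- b) * RInt (gamma_weight b 1) (a * x) (a * y).
Proof.
  intros Ha Hx Hxy.
  assert (E : ex_RInt (gamma_weight b 1) (a * x + 0) (a * y + 0))
    by (rewrite !Rplus_0_r; apply ex_RInt_gamma_weight; nra).
  assert (C := @RInt_comp_lin R_CompleteNormedModule (gamma_weight b 1) a 0 x y E).
  rewrite !Rplus_0_r in C. rewrite <- C.
  rewrite (@RInt_ext R_CompleteNormedModule (fun s => scal a (gamma_weight b 1 (a * s + 0)))
                                            (fun s => exp (b * ln a) * gamma_weight b a s)).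
  - rewrite (@RInt_scal R_CompleteNormedModule) by (apply ex_RInt_gamma_weight; auto).
    change (RInt (gamma_weight b a) x y =
            Rpower a (- b) * (exp (b * ln a) * RInt (gamma_weight b a) x y)).
    unfold Rpower. rewrite <- Rmult_assoc, <- exp_plus.
    replace (- b * ln a + b * ln a) with 0 by ring. rewrite exp_0. symmetry. apply Rmult_1_l.
  - intros s Hs. rewrite Rmin_left in Hs by auto. rewrite Rmax_right in Hs by auto.
    change (scal a (gamma_weight b 1 (a * s + 0))) with (a * gamma_weight b 1 (a * s + 0)).
    unfold gamma_weight. rewrite Rplus_0_r, ln_mult by lra.
    rewrite <- (exp_ln a) at 1 by auto. rewrite <- !exp_plus. f_equal. ring.
Qed.

Lemma RInt_laplace_term b t n k : 0 < t -> (1 <= n)%nat ->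
  RInt (fun s => gamma_weight b (t - 1) s * exp (- s) ^ n) (1 / trunc_radius k) (trunc_radius k) =
  Rpower (INR n - 1 + t) (- b) * gamma_trunc b (INR n - 1 + t) k.
Proof.
  intros Ht Hn. set (a := INR n - 1 + t).
  assert (Ha : 0 < a) by (unfold a; apply le_INR in Hn; simpl in Hn; lra).
  destruct (trunc_interval 1 _ Rlt_0_1 (trunc_radius_ge_2 k)) as [I1 [I2 I3]].
  rewrite <- (@RInt_ext R_CompleteNormedModule (gamma_weight b a)).
  - rewrite RInt_gamma_weight_scale by (auto; lra). unfold gamma_trunc.
    replace (a * (1 / trunc_radius k)) with (a / trunc_radius k) by (unfold Rdiv; ring).
    reflexivity.
  - intros s Hs. rewrite Rmin_left in Hs by lra. apply gamma_weight_shift. lra.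
Qed.

(* [a_n^(-b) Gamma_k(a_n)] with [a_n = n - 1 + t]; [n = 0] never matters since [|T| >= 1]. *)
Definition moment_trunc_kernel (b t : R) (k n : nat) : R :=
  match n with
  | O => 0
  | _ => Rpower (INR n - 1 + t) (- b) * gamma_trunc b (INR n - 1 + t) k
  end.

Definition moment_kernel (b t : R) (n : nat) : R :=
  match n with O => 0 | _ => Rpower (INR n - 1 + t) (- b) * gamma_limit b end.

Lemma Series_moment_trunc_kernel p b t k : offspring_law p -> 0 < t ->
  Series (fun n => gw_size_law p n * moment_trunc_kernel b t k n) =
  RInt (fun s => gamma_weight b (t - 1) s * size_gf p (exp (- s)))
       (1 / trunc_radius k) (trunc_radius k).
Proof.
  intros Hl Ht. destruct (trunc_interval 1 _ Rlt_0_1 (trunc_radius_ge_2 k)) as [I1 [I2 I3]].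
  rewrite <- (is_series_unique _ _ (is_series_RInt_size_gf p b (t - 1) (1 / trunc_radius k)
                                                            (trunc_radius k) Hl I1 ltac:(lra))).
  apply Series_ext. intros [|n]; [rewrite gw_size_law_0; ring|].
  unfold moment_trunc_kernel. rewrite RInt_laplace_term by (auto; lia). reflexivity.
Qed.

Lemma Series_moment_kernel p b t :
  Series (fun n => gw_size_law p n * moment_kernel b t n) = gamma_limit b * gw_moment p (- b) t.
Proof.
  unfold gw_moment. rewrite <- Series_scal_l. apply Series_ext. intros [|n].
  - rewrite gw_size_law_0. ring.
  - unfold moment_kernel. ring.
Qed.

Lemma moment_trunc_kernel_bound b t k n : 0 < b -> 0 < t ->
  Rabs (moment_trunc_kernel b t k n) <= Rpower t (- b) * gamma_bound b.
Proof.
  intros Hb Ht. destruct n as [|n].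
  - simpl. rewrite Rabs_R0. apply Rmult_le_pos; [left; apply exp_pos|].
    unfold gamma_bound. assert (0 < / b) by (apply Rinv_0_lt_compat; auto).
    assert (0 < exp (gamma_tail_const b)) by apply exp_pos. lra.
  - unfold moment_trunc_kernel. set (a := INR (S n) - 1 + t).
    assert (Hat : t <= a) by (unfold a; rewrite S_INR; pose proof (pos_INR n); lra).
    destruct (trunc_interval a _ ltac:(lra) (trunc_radius_ge_2 k)) as [I1 [I2 I3]].
    assert (F0 := RInt_gamma_weight_nonneg b 1 _ (a * trunc_radius k) I1 ltac:(lra)).
    assert (F1 := RInt_gamma_weight_le_bound b _ (a * trunc_radius k) Hb I1 ltac:(lra)).
    unfold gamma_trunc. rewrite Rabs_pos_eq by (apply Rmult_le_pos; auto; left; apply exp_pos).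
    apply Rmult_le_compat; auto; [left; apply exp_pos|].
    unfold Rpower. apply exp_le. assert (ln t <= ln a) by (apply ln_le; auto). nra.
Qed.

Lemma moment_trunc_kernel_lim b t n : 0 < b -> 0 < t ->
  is_lim_seq (fun k => moment_trunc_kernel b t k n) (moment_kernel b t n).
Proof.
  intros Hb Ht. destruct n as [|n]; [apply is_lim_seq_const|].
  apply is_lim_seq_mult'; [apply is_lim_seq_const|]. apply is_lim_seq_gamma_trunc; auto.
  rewrite S_INR. pose proof (pos_INR n). lra.
Qed.

(* [Gamma(b) E(|T| - 1 + t)^(-b) = int_0^oo s^(b-1) e^(-(t-1) s) G(e^(-s)) ds], monotone in [G],
   is reached through the windows [[1 / L, L]]. *)
Lemma gw_moment_le_of_size_gf_le p1 p2 : offspring_law p1 -> offspring_law p2 ->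
  (forall z, 0 < z < 1 -> size_gf p1 z <= size_gf p2 z) ->
  forall alpha t, alpha < 0 -> 0 < t -> gw_moment p1 alpha t <= gw_moment p2 alpha t.
Proof.
  intros Hl1 Hl2 HG alpha t Ha Ht. set (b := - alpha).
  assert (Hb : 0 < b) by (unfold b; lra). replace alpha with (- b) by (unfold b; ring).
  assert (L : forall p, offspring_law p ->
            is_lim_seq (fun k => Series (fun n => gw_size_law p n * moment_trunc_kernel b t k n))
                       (gamma_limit b * gw_moment p (- b) t)).
  { intros p Hl. rewrite <- Series_moment_kernel.
    apply (is_lim_seq_Series_dominated _ _ _ (Rpower t (- b) * gamma_bound b)).
    - apply gw_size_law_nonneg, Hl.
    - apply ex_series_gw_size_law, Hl.
    - intros k n. apply moment_trunc_kernel_bound; auto.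
    - intros n. apply moment_trunc_kernel_lim; auto. }
  assert (Hle : forall k, Series (fun n => gw_size_law p1 n * moment_trunc_kernel b t k n)
                       <= Series (fun n => gw_size_law p2 n * moment_trunc_kernel b t k n)).
  { intros k. rewrite !Series_moment_trunc_kernel by auto.
    destruct (trunc_interval 1 _ Rlt_0_1 (trunc_radius_ge_2 k)) as [I1 [I2 I3]].
    apply RInt_le; [lra|apply ex_RInt_weighted_size_gf; auto; lra..|].
    intros s Hs. apply Rmult_le_compat_l; [left; apply gamma_weight_pos|]. apply HG.
    split; [apply exp_pos|]. rewrite <- exp_0. apply exp_increasing. lra. }
  apply Rmult_le_reg_l with (gamma_limit b); [apply gamma_limit_pos, Hb|].
  apply (is_lim_seq_le _ _ _ _ Hle (L p1 Hl1) (L p2 Hl2)).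
Qed.

Theorem theorem6p5 (p1 p2 : nat -> R)
  (hp1 : offspring_law p1) (hm1 : mean_one p1) (hv1 : finite_positive_variance p1)
  (hp2 : offspring_law p2) (hm2 : mean_one p2) (hv2 : finite_positive_variance p2) :
  ((forall (m : nat) (t : R), 0 < t ->
       gw_moment p1 (- INR (S m)) t <= gw_moment p2 (- INR (S m)) t)
   <-> (forall t : R, 0 < t < 1 -> pgf p1 t <= pgf p2 t))
  /\ ((forall t : R, 0 < t < 1 -> pgf p1 t <= pgf p2 t) ->
      forall alpha t : R, alpha < 0 -> 0 < t ->
        gw_moment p1 alpha t <= gw_moment p2 alpha t).
Proof.
  assert (Moments : (forall t, 0 < t < 1 -> pgf p1 t <= pgf p2 t) ->
            forall alpha t, alpha < 0 -> 0 < t -> gw_moment p1 alpha t <= gw_moment p2 alpha t).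
  { intros HP. apply gw_moment_le_of_size_gf_le; auto. apply size_gf_le_of_pgf_le; auto. }
  split; [split|exact Moments].
  - intros HM. apply pgf_le_of_size_gf_le; auto. apply size_gf_le_of_int_moments_le; auto.
  - intros HP m t Ht. apply Moments; auto.
    assert (0 < INR (S m)) by (apply lt_0_INR; lia). lra.
Qed.
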